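(* Let $n\ge 1$ and let $\mathcal{E}$ be a probability distribution (ensemble) over $n$-qubit unitaries (quantum circuits) $C$ that is well-spread, i.e. there is a constant $\gamma$ (independent of $n$) such that $$\mathbb{E}_{C\sim\mathcal{E}}\big[\pi_C\big]\le \frac{\gamma}{2^n}.$$ For $\delta\in(0,1]$, let $P_\delta$ denote the probability that a circuit $C\sim\mathcal{E}$ is $\delta$-peaked. Then $$P_\delta = O\!\left(\frac{1}{\delta^{2}\,2^{n}}\right).$$
   Context: For an $n$-qubit unitary $C$, let $p_C[s]=|\langle s|C|0^n\rangle|^2$ for $s\in\{0,1\}^n$ be its output distribution when applied to $|0^n\rangle$ and measured in the computational basis. The collision probability of $C$ is $\pi_C:=\sum_{s\in\{0,1\}^n}p_C[s]^2$. Given $\delta\in(0,1]$, $C$ is called $\delta$-peaked if $\max_{s\in\{0,1\}^n}|\langle s|C|0^n\rangle|^2\ge\delta$. The constant implicit in the $O(\cdot)$ may depend on $\gamma$. *)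

From HB Require Import structures.
From mathcomp Require Import all_boot all_order all_algebra.
From mathcomp Require Import all_classical all_reals all_analysis.
From mathcomp.real_closed Require Import complex.

Set Implicit Arguments.
Unset Strict Implicit.
Unset Printing Implicit Defensive.

Import Order.TTheory GRing.Theory Num.Theory.
Local Open Scope ring_scope.

(* Computational basis states of n qubits are indexed by 'I_(2^n)
   (binary encoding of bitstrings s in {0,1}^n); index 0 is |0^n>. *)

Section Quantum.
Variable R : realType.
Variable n : nat.

Definition ket0 : 'I_(2 ^ n) := Ordinal (expn_gt0 2 n).

Definition adjmx (C : 'M[R[i]]_(2 ^ n)) : 'M[R[i]]_(2 ^ n) :=
  (map_mx (@conjc R) C)^T.

Definition unitary (C : 'M[R[i]]_(2 ^ n)) : Prop :=
  adjmx C *m C = 1%:M.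

Definition sqnorm (z : R[i]) : R := complex.Re z ^+ 2 + complex.Im z ^+ 2.

Definition outp (C : 'M[R[i]]_(2 ^ n)) (s : 'I_(2 ^ n)) : R :=
  sqnorm (C s ket0).

Definition collision (C : 'M[R[i]]_(2 ^ n)) : R :=
  \sum_(s < 2 ^ n) outp C s ^+ 2.

Definition peaked (C : 'M[R[i]]_(2 ^ n)) (delta : R) : Prop :=
  delta <= \big[Num.max/0]_(s < 2 ^ n) outp C s.
End Quantum.

From HB Require Import structures.
From mathcomp Require Import all_boot all_order all_algebra.
From mathcomp Require Import all_classical all_reals all_analysis.
From mathcomp.real_closed Require Import complex.
From mathcomp Require Import measurable_realfun.

(* A delta-peaked circuit has some output probability p_C[s] >= delta, hence
   collision probability pi_C >= p_C[s]^2 >= delta^2.  Markov's inequality for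
   the nonnegative random variable pi_C then bounds the probability of being
   delta-peaked by E[pi_C] / delta^2 <= gamma / (delta^2 2^n). *)

Import Order.TTheory GRing.Theory Num.Theory.
Local Open Scope ring_scope.
Local Open Scope classical_set_scope.

Lemma markov_integral {d} {T : measurableType d} {R : realType}
    (mu : {measure set T -> \bar R}) (f : T -> R) (c : R) :
  0 < c -> measurable_fun setT f -> (forall x, 0 <= f x) ->
  (c%:E * mu [set x | (c <= f x)%R] <= \int[mu]_x (f x)%:E)%E.
Proof.
move=> c0 mf f0.
have mEf : measurable_fun [set: T] (EFin \o f) by exact/measurable_EFinP.
have := @le_integral_comp_abse _ _ _ mu _ measurableT _ c id
  (@measurable_id _ _ setT) (fun r r0 => r0) (fun x y _ _ => id) mEf c0.
rewrite setTI.
have -> : [set x | (c%:E <= `|(EFin \o f) x|)%E] = [set x | c <= f x].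
  by apply/seteqP; split => x /=; rewrite lee_fin ger0_norm.
by under eq_integral => x _ do rewrite /= ger0_norm //.
Qed.

Section Peaked.
Context {R : realType} {n : nat}.
Implicit Types (C : 'M[R[i]]_(2 ^ n)) (delta : R).

Lemma outp_ge0 C s : 0 <= outp C s.
Proof. by rewrite /outp /sqnorm addr_ge0 // sqr_ge0. Qed.

Lemma peakedP C delta :
  0 < delta -> peaked C delta <-> exists s, delta <= outp C s.
Proof.
move=> delta_gt0; rewrite /peaked; split.
- by case/bigmax_geP => [|[s _ ?]]; [rewrite leNgt delta_gt0 | exists s].
- by case=> s ?; apply/bigmax_geP; right; exists s.
Qed.

Lemma peaked_collision C delta :
  0 < delta -> peaked C delta -> delta ^+ 2 <= collision C.
Proof.
move=> delta_gt0 /(peakedP _ _ delta_gt0) [s delta_le].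
rewrite /collision (bigD1 s) //= -[leLHS]addr0 lerD ?sumr_ge0 //.
- by rewrite ler_sqr ?nnegrE ?outp_ge0 // ltW.
- by move=> j _; rewrite sqr_ge0.
Qed.

Context {d : measure_display} {T : measurableType d} {U : T -> 'M[R[i]]_(2 ^ n)}.
Hypothesis measurable_outp :
  forall s, measurable_fun setT (fun t => outp (U t) s).

Lemma measurable_collision : measurable_fun setT (fun t => collision (U t)).
Proof.
apply: measurable_sum => s.
exact: measurable_funX.
Qed.

Lemma measurable_peaked delta :
  0 < delta -> measurable [set t | peaked (U t) delta].
Proof.
move=> delta_gt0.
have -> : [set t | peaked (U t) delta] =
    \bigcup_(s in [set: 'I_(2 ^ n)]) [set t | delta <= outp (U t) s].
  apply/seteqP; split => t /=.
  - by move/(peakedP _ _ delta_gt0) => [s ?]; exists s.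
  - by case=> s _ ?; apply/(peakedP _ _ delta_gt0); exists s.
apply: fin_bigcup_measurable; first exact: finite_finset.
move=> s _; rewrite -[X in measurable X]setTI.
exact: measurable_fun_ler (measurable_cst delta)
  (measurable_outp s) measurableT [set true] I.
Qed.

Lemma peaked_measure_le (mu : {measure set T -> \bar R}) delta :
  0 < delta ->
  ((delta ^+ 2)%:E * mu [set t | peaked (U t) delta]
    <= \int[mu]_t (collision (U t))%:E)%E.
Proof.
move=> delta_gt0.
have collision_ge0 t : 0 <= collision (U t).
  by rewrite sumr_ge0 // => s _; rewrite sqr_ge0.
apply: (le_trans _ (markov_integral mu _ _ (exprn_gt0 2 delta_gt0)
  measurable_collision collision_ge0)).
rewrite lee_wpmul2l ?lee_fin ?sqr_ge0 //.
apply: le_measure; rewrite ?inE.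
- exact: measurable_peaked.
- rewrite -[X in measurable X]setTI -preimage_itvcy.
  by apply: measurable_collision => //; exact: measurable_itv.
- by move=> t /peaked_collision; apply.
Qed.

End Peaked.

Theorem theorem1 (R : realType) (gamma : R) :
  exists K : R,
  forall (n : nat), (1 <= n)%N ->
  forall (d : measure_display) (T : measurableType d) (P : probability T R)
         (U : T -> 'M[R[i]]_(2 ^ n)),
    (forall t, unitary (U t)) ->
    (forall s : 'I_(2 ^ n), measurable_fun setT (fun t => outp (U t) s)) ->
    (\int[P]_t (collision (U t))%:E <= (gamma / (2 ^+ n)%:R)%:E)%E ->
    forall delta : R, 0 < delta -> delta <= 1 ->
      (P [set t | peaked (U t) delta] <= (K / (delta ^+ 2 * (2 ^ n)%:R))%:E)%E.
Proof.
exists gamma => n _ d T P U _ measurable_outp collision_mean delta delta_gt0 _.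
have := le_trans (peaked_measure_le measurable_outp P _ delta_gt0) collision_mean.
rewrite natrXE => peaked_le.
by rewrite invfM mulrCA EFinM lee_pdivlMl ?exprn_gt0.
Qed.
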